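(* Let $\mathcal{B}$ be a real Banach space with dual $\mathcal{B}^*$, let $\nu_j\in\mathcal{B}^*$, $j\in\mathbb{N}_m$, be linearly independent and let $\mathbf{y}\in\mathbb{R}^m$. Then $\hat f\in\mathcal{B}$ is a solution of the minimum norm interpolation problem with data $\mathbf{y}$ if and only if $\hat f\in\mathcal{M}_{\mathbf{y}}$ and there exist $c_j\in\mathbb{R}$, $j\in\mathbb{N}_m$, such that $$\hat f\in\gamma\,\partial\|\cdot\|_{\mathcal{B}^*}\Big(\sum_{j\in\mathbb{N}_m}c_j\nu_j\Big),\qquad \gamma:=\Big\|\sum_{j\in\mathbb{N}_m}c_j\nu_j\Big\|_{\mathcal{B}^*},$$ where $\hat f$ is identified with its canonical image in $\mathcal{B}^{**}$.
   Context: $\mathcal{B}$ is a real Banach space with dual $\mathcal{B}^*$ and pairing $\langle\nu,f\rangle_{\mathcal{B}}:=\nu(f)$; $\mathbb{N}_m:=\{1,\dots,m\}$; $\mathcal{L}(f):=[\langle\nu_j,f\rangle_{\mathcal{B}}:j\in\mathbb{N}_m]$, $\mathcal{M}_{\mathbf{y}}:=\{f\in\mathcal{B}:\mathcal{L}(f)=\mathbf{y}\}$; a solution of the minimum norm interpolation problem with data $\mathbf{y}$ is an $\hat f\in\mathcal{M}_{\mathbf{y}}$ with $\|\hat f\|_{\mathcal{B}}=\inf\{\|f\|_{\mathcal{B}}:f\in\mathcal{M}_{\mathbf{y}}\}$. For a convex $\phi$ on a real normed space $X$, $\partial\phi(f):=\{\nu\in X^*:\phi(g)-\phi(f)\ge\nu(g-f)\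 \forall g\in X\}$; so $\partial\|\cdot\|_{\mathcal{B}^*}(\nu)\subseteq\mathcal{B}^{**}$. *)

From HB Require Import structures.
From mathcomp Require Import all_boot all_order all_algebra.
From mathcomp Require Import all_classical all_reals all_analysis.
Set Implicit Arguments. Unset Strict Implicit. Unset Printing Implicit Defensive.
Import Order.TTheory GRing.Theory Num.Theory.
Import numFieldNormedType.Exports.
Local Open Scope classical_set_scope.
Local Open Scope ring_scope.

Definition is_dual {R : realType} {B : normedModType R} (nu : B -> R) : Prop :=
  (forall (a : R) (x y : B), nu (a *: x + y) = a * nu x + nu y) /\ continuous nu.

Definition dnorm {R : realType} {B : normedModType R} (nu : B -> R) : R :=
  sup [set `|nu x| | x in [set x : B | `|x| <= 1]].

Definition is_bidual {R : realType} {B : normedModType R} (phi : (B -> R) -> R) : Prop :=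
  (forall (a : R) (mu1 mu2 : B -> R), is_dual mu1 -> is_dual mu2 ->
      phi (fun x => a * mu1 x + mu2 x) = a * phi mu1 + phi mu2) /\
  (exists C : R, forall mu : B -> R, is_dual mu -> `|phi mu| <= C * dnorm mu).

Definition subdiff_dnorm {R : realType} {B : normedModType R} (nu : B -> R)
  (phi : (B -> R) -> R) : Prop :=
  is_bidual phi /\
  forall mu : B -> R, is_dual mu ->
    dnorm mu - dnorm nu >= phi (fun x => mu x - nu x).

Definition canon_emb {R : realType} {B : normedModType R} (f : B) : (B -> R) -> R :=
  fun mu => mu f.

Definition interp_set {R : realType} {B : normedModType R} (m : nat)
  (nu : 'I_m -> B -> R) (y : 'I_m -> R) : set B :=
  [set f | forall j, nu j f = y j].

Definition is_mni_solution {R : realType} {B : normedModType R} (m : nat)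
  (nu : 'I_m -> B -> R) (y : 'I_m -> R) (fh : B) : Prop :=
  interp_set nu y fh /\ `|fh| = inf [set `|f| | f in interp_set nu y].

Definition lin_indep_dual {R : realType} {B : normedModType R} (m : nat)
  (nu : 'I_m -> B -> R) : Prop :=
  forall c : 'I_m -> R, (forall x : B, \sum_(j < m) c j * nu j x = 0) ->
    forall j, c j = 0.

From HB Require Import structures.
From mathcomp Require Import all_boot all_order all_algebra.
From mathcomp Require Import all_classical all_reals all_analysis.
From mathcomp Require Import ring lra.
Import Order.TTheory GRing.Theory Num.Theory.
Import numFieldNormedType.Exports.
Local Open Scope classical_set_scope.
Local Open Scope ring_scope.
Set Implicit Arguments. Unset Strict Implicit. Unset Printing Implicit Defensive.

(* Write nu_c := sum_j c_j nu_j.  An interpolant fh has minimal norm iff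
   fh = ||nu_c|| g for some c and some g with ||g|| <= 1 and
   nu_c g = ||nu_c||; such a norming element g, viewed in B^**, is a
   subgradient of the dual norm at nu_c. *)

Section LinearFunctionals.
Context {R : realType} {B : normedModType R}.

Definition islin (f : B -> R) :=
  forall (a : R) (x y : B), f (a *: x + y) = a * f x + f y.

Definition is_bounded (f : B -> R) := exists K, forall x, `|f x| <= K * `|x|.

Lemma lin0 f : islin f -> f 0 = 0.
Proof.
move=> hf; have := hf 1 0 0; rewrite scaler0 addr0 mul1r.
by move=> /(congr1 (fun z => z - f 0)); rewrite subrr addrK => <-.
Qed.

Lemma linZ f a x : islin f -> f (a *: x) = a * f x.
Proof. by move=> hf; have := hf a x 0; rewrite addr0 lin0 // addr0. Qed.

Lemma linD f x y : islin f -> f (x + y) = f x + f y.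
Proof. by move=> hf; have := hf 1 x y; rewrite scale1r mul1r. Qed.

Lemma linB f x y : islin f -> f (x - y) = f x - f y.
Proof. by move=> hf; rewrite linD // -scaleN1r linZ // mulN1r. Qed.

Lemma bounded_continuous f K :
  islin f -> (forall x, `|f x| <= K * `|x|) -> continuous f.
Proof.
move=> hl hb x; apply/cvgrPdist_lt => e e0; apply/nbhs_normP.
have k0 : 0 < `|K| + 1 by rewrite ltr_wpDl.
exists (e / (`|K| + 1)) => /=; first by rewrite divr_gt0.
move=> z /= hz; rewrite -linB //; apply: (le_lt_trans (hb _)).
move: hz; rewrite ltr_pdivlMr // => hz; apply: le_lt_trans hz.
rewrite [X in _ <= X]mulrC; apply: ler_wpM2r => //.
by apply: le_trans (ler_norm K) _; rewrite lerDl.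
Qed.

(* A continuous linear functional is bounded: continuity at 0 gives a ball of
   radius d on which |f| < 1, hence the bound 2/d. *)
Lemma continuous_bounded f : islin f -> continuous f -> is_bounded f.
Proof.
move=> hl hc; have := hc 0; rewrite /continuous_at (lin0 hl).
move=> /cvgrPdist_lt /(_ 1 ltr01) /nbhs_norm0P [d /= d0 hd].
exists (2 / d) => x; have [->|x0] := eqVneq x 0.
  by rewrite lin0 // normr0 normr0 mulr0.
have n0 : 0 < `|x| by rewrite normr_gt0.
(* t x lies in the ball of radius d, so t |f x| < 1 *)
pose t := d / (2 * `|x|).
have t0 : 0 < t by rewrite divr_gt0 // mulr_gt0.
have tx : t * `|x| = d / 2 by rewrite /t; field; rewrite gt_eqF.
have := hd (t *: x) => /=.
rewrite sub0r normrN normrZ gtr0_norm // tx linZ // normrM gtr0_norm //.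
move=> /(_ _) lt1; have {}lt1 : t * `|f x| < 1 by apply: lt1; lra.
have -> : 2 / d * `|x| = t^-1 by rewrite /t; field; rewrite !gt_eqF.
by rewrite -(ler_pM2l t0) mulfV ?gt_eqF // ltW.
Qed.

Lemma dnorm_has_ubound f :
  is_bounded f -> has_ubound [set `|f x| | x in [set x : B | `|x| <= 1]].
Proof.
move=> [K hK]; exists `|K| => _ [x /= x1 <-]; apply: (le_trans (hK x)).
apply: (le_trans (ler_norm _)); rewrite normrM normr_id.
by apply: ler_piMr => //; rewrite normr_id.
Qed.

Lemma dnorm_ge0 f : is_bounded f -> 0 <= dnorm f.
Proof.
move=> hb; apply: (le_trans (normr_ge0 (f 0))); apply: ub_le_sup.
  exact: dnorm_has_ubound.
by exists 0 => //=; rewrite normr0.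
Qed.

Lemma dnorm_le (f : B -> R) K : 0 <= K -> (forall x, `|f x| <= K * `|x|) -> dnorm f <= K.
Proof.
move=> K0 hK; apply: ge_sup; first by exists `|f 0|, 0 => //=; rewrite normr0.
by move=> _ [x /= x1 <-]; apply: (le_trans (hK x)); exact: ler_piMr.
Qed.

Lemma dnorm_bound f : islin f -> is_bounded f -> forall x, `|f x| <= dnorm f * `|x|.
Proof.
move=> hl hb x; have [->|x0] := eqVneq x 0.
  by rewrite lin0 // !normr0 mulr0.
have n0 : 0 < `|x| by rewrite normr_gt0.
have : `|f (`|x|^-1 *: x)| <= dnorm f.
  apply: ub_le_sup; first exact: dnorm_has_ubound.
  exists (`|x|^-1 *: x) => //=.
  by rewrite normrZ normrV ?unitfE ?gt_eqF // normr_id mulVf // gt_eqF.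
by rewrite linZ // normrM normrV ?unitfE ?gt_eqF // normr_id ler_pdivrMl // mulrC.
Qed.

End LinearFunctionals.

Section DualSpace.
Context {R : realType} {B : normedModType R}.

Lemma dual_bounded (f : B -> R) : is_dual f -> is_bounded f.
Proof. by move=> [hl hc]; exact: continuous_bounded. Qed.

Lemma bounded_dual (f : B -> R) : islin f -> is_bounded f -> is_dual f.
Proof. by move=> hl [K hK]; split => //; exact: bounded_continuous hK. Qed.

Lemma dual_bound (f : B -> R) x : is_dual f -> `|f x| <= dnorm f * `|x|.
Proof. by move=> hf; apply: dnorm_bound; [exact: hf.1 | exact: dual_bounded]. Qed.

Lemma dual_ext (f g : B -> R) : (forall x, f x = g x) -> is_dual g -> is_dual f.
Proof. by move=> /funext ->. Qed.

Lemma dual0 : is_dual (fun _ : B => (0 : R)).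
Proof.
apply: bounded_dual; first by move=> *; rewrite mulr0 addr0.
by exists 0 => x; rewrite normr0 mul0r.
Qed.

Lemma dual_comb a (f g : B -> R) : is_dual f -> is_dual g ->
  is_dual (fun x => a * f x + g x).
Proof.
move=> hf hg; apply: bounded_dual; first by move=> b x y; rewrite hf.1 hg.1; ring.
exists (`|a| * dnorm f + dnorm g) => x.
apply: (le_trans (ler_normD _ _)); rewrite normrM mulrDl -mulrA.
by apply: lerD; [apply: ler_wpM2l |]; rewrite ?normr_ge0 ?dual_bound.
Qed.

Definition lincomb m (nu : 'I_m -> B -> R) (c : 'I_m -> R) : B -> R :=
  fun x => \sum_(j < m) c j * nu j x.

Lemma dual_lincomb m (nu : 'I_m -> B -> R) (c : 'I_m -> R) :
  (forall j, is_dual (nu j)) -> is_dual (lincomb nu c).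
Proof.
elim: m nu c => [|m IH] nu c hnu.
  by apply: (dual_ext _ dual0) => x; rewrite /lincomb big_ord0.
have hrest := IH _ (fun k => c (lift ord0 k)) (fun k => hnu (lift ord0 k)).
by apply: (dual_ext _ (dual_comb (c ord0) (hnu ord0) hrest)) => x;
  rewrite /lincomb big_ord_recl.
Qed.

Lemma dnorm0 : dnorm (fun _ : B => (0 : R)) = 0.
Proof.
apply/le_anti/andP; split; first by apply: dnorm_le => // x; rewrite normr0 mul0r.
exact: dnorm_ge0 (dual_bounded dual0).
Qed.

Lemma dnormD (f g : B -> R) : is_dual f -> is_dual g ->
  dnorm (fun x => f x + g x) <= dnorm f + dnorm g.
Proof.
move=> hf hg; apply: dnorm_le.
  by apply: addr_ge0; apply: dnorm_ge0; exact: dual_bounded.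
move=> x; apply: (le_trans (ler_normD _ _)); rewrite mulrDl.
by apply: lerD; exact: dual_bound.
Qed.

End DualSpace.

Section HahnBanach.
Context {R : realType} {B : normedModType R}.
Variable K : R.
Hypothesis K0 : 0 <= K.

(* G is the graph of a linear functional defined on a subspace of B and
   dominated there by K ||x||. *)
Definition dom_graph (G : set (B * R)) :=
  [/\ G (0, 0),
      (forall a p q, G p -> G q -> G (a *: p.1 + q.1, a * p.2 + q.2)),
      (forall x a b, G (x, a) -> G (x, b) -> a = b) &
      (forall x a, G (x, a) -> a <= K * `|x|)].

Section OneStepExtension.
Variables (G : set (B * R)) (x0 : B).
Hypothesis G_dom : dom_graph G.

Definition graph_ext (c : R) : set (B * R) :=
  fun q => exists t p, G p /\ q = (t *: x0 + p.1, t * c + p.2).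

(* Domination forces a - K ||d - x0|| <= c <= K ||d' + x0|| - a' for all
   points (d, a), (d', a') of G; such a c exists by the triangle inequality. *)
Lemma ext_value : exists c,
  (forall d a, G (d, a) -> a - K * `|d - x0| <= c) /\
  (forall d a, G (d, a) -> c <= K * `|d + x0| - a).
Proof.
case: G_dom => G00 Gcl _ Gdom.
pose S := [set p.2 - K * `|p.1 - x0| | p in G].
have Sub d' a' : G (d', a') -> ubound S (K * `|d' + x0| - a').
  move=> Gd _ [[d a] /= Gp <-].
  have := Gdom _ _ (Gcl 1 _ _ Gp Gd); rewrite /= scale1r mul1r => h.
  have : `|d + d'| <= `|d - x0| + `|d' + x0|.
    by have := ler_normD (d - x0) (d' + x0); rewrite addrACA addNr addr0.
  move=> /(ler_wpM2l K0); rewrite mulrDr => h2; lra.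
have Sne : S !=set0 by exists (0 - K * `|0 - x0|), (0, 0).
have Shu : has_ubound S by exists (K * `|0 + x0| - 0); exact: Sub.
exists (sup S); split => [d a Gd | d' a' Gd].
- by apply: ub_le_sup => //; exists (d, a).
- by apply: ge_sup => //; exact: Sub.
Qed.

Lemma graph_ext_functional c : ~ (exists a, G (x0, a)) ->
  forall x a b, graph_ext c (x, a) -> graph_ext c (x, b) -> a = b.
Proof.
case: G_dom => G00 Gcl Gfun _ nx0 x a b.
move=> [t [[d u] [Gp [ex ->]]]] [t' [[d' u'] [Gp' [ex' ->]]]] /=.
rewrite /= in ex ex'.
have e : t *: x0 + d = t' *: x0 + d' by rewrite -ex -ex'.
have [tt'|tt'] := eqVneq t t'.
  move: e Gp'; rewrite -tt' => e.
  by rewrite -(addrI _ e) => /(Gfun _ _ _ Gp) ->.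
(* otherwise x0 = (t - t')^-1 (d' - d) would lie in the domain of G *)
exfalso; apply: nx0.
have Gdd := Gcl (-1) _ _ Gp Gp'; rewrite /= scaleN1r mulN1r in Gdd.
have Gs := Gcl ((t - t')^-1) _ _ Gdd G00; rewrite /= !addr0 in Gs.
eexists; suff -> : x0 = (t - t')^-1 *: (- d + d') by exact: Gs.
apply: (@scalerI _ _ (t - t')); first by rewrite subr_eq0.
rewrite scalerA mulfV ?subr_eq0 // scale1r scalerBl.
have -> : t *: x0 = t' *: x0 + (- d + d').
  by apply: (addIr d); rewrite e -!addrA; congr (_ + _); rewrite addrC addrK.
by rewrite addrC addKr.
Qed.

(* Dividing a point (d, u) of G by s > 0 gives the point that the bounds of
   [ext_value] compare with c. *)
Lemma graph_ext_dominated c :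
  (forall d a, G (d, a) -> a - K * `|d - x0| <= c) ->
  (forall d a, G (d, a) -> c <= K * `|d + x0| - a) ->
  forall x a, graph_ext c (x, a) -> a <= K * `|x|.
Proof.
case: G_dom => G00 Gcl _ Gdom lower upper x a [t [[d u] [Gp [-> ->]]]] /=.
have Gdiv s : G (s^-1 *: d, s^-1 * u).
  by have := Gcl s^-1 _ _ Gp G00; rewrite /= !addr0.
have [t0|t0|->] := ltgtP t 0; last by rewrite scale0r mul0r !add0r; exact: Gdom.
- pose s := - t; have s0 : 0 < s by rewrite /s oppr_gt0.
  have := lower _ _ (Gdiv s).
  have -> : s^-1 *: d - x0 = s^-1 *: (t *: x0 + d).
    rewrite scalerDr scalerA (_ : s^-1 * t = -1) ?scaleN1r 1?addrC //.
    by rewrite /s invrN mulNr mulVf ?lt_eqF.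
  rewrite normrZ gtr0_norm ?invr_gt0 //.
  move: (`|t *: x0 + d|) => n h.
  have hs : s * (s^-1 * u - K * (s^-1 * n)) <= s * c by rewrite ler_pM2l.
  have : s * (s^-1 * u - K * (s^-1 * n)) = u - K * n by field; rewrite gt_eqF.
  rewrite /s in hs * => e; lra.
- have := upper _ _ (Gdiv t).
  have -> : t^-1 *: d + x0 = t^-1 *: (t *: x0 + d).
    by rewrite scalerDr scalerA mulVf ?gt_eqF // scale1r addrC.
  rewrite normrZ gtr0_norm ?invr_gt0 //.
  move: (`|t *: x0 + d|) => n h.
  have hs : t * c <= t * (K * (t^-1 * n) - t^-1 * u) by rewrite ler_pM2l.
  have : t * (K * (t^-1 * n) - t^-1 * u) = K * n - u by field; rewrite gt_eqF.
  move=> e; lra.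
Qed.

Lemma dom_graph_extend : ~ (exists a, G (x0, a)) ->
  exists G', [/\ dom_graph G', G `<=` G' & exists c, G' (x0, c)].
Proof.
move=> nx0; have [c [lower upper]] := ext_value.
case: (G_dom) => G00 Gcl _ _.
exists (graph_ext c); split.
- split.
  + by exists 0, (0, 0); split => //; rewrite /= scale0r mul0r !add0r.
  + move=> a _ _ [t [p [Gp ->]]] [t' [p' [Gp' ->]]] /=.
    exists (a * t + t'), (a *: p.1 + p'.1, a * p.2 + p'.2).
    split; first exact: Gcl.
    congr (_, _) => /=; last by ring.
    by rewrite /= scalerDr scalerDl scalerA addrACA.
  + exact: graph_ext_functional.
  + exact: graph_ext_dominated.
- by move=> [d a] Gp; exists 0, (d, a); rewrite /= scale0r mul0r !add0r.
- by exists c, 1, (0, 0); rewrite /= scale1r mul1r !addr0.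
Qed.

End OneStepExtension.

(* The union of G0 and a chain of sets H with [dom_graph (G0 `|` H)] is again
   a dominated graph: any two of its points lie in a common member. *)
Lemma dom_graph_chain (G0 : set (B * R)) (F : set (set (B * R))) :
  dom_graph G0 -> (forall H, F H -> dom_graph (G0 `|` H)) ->
  total_on F subset -> dom_graph (G0 `|` \bigcup_(H in F) H).
Proof.
move=> G0_dom FQ Ftot; set U := G0 `|` _.
have sub H : F H -> G0 `|` H `<=` U by move=> FH z [?|?]; [left|right; exists H].
have common p q : U p -> U q -> exists H, [/\ dom_graph H, H `<=` U, H p & H q].
  move=> [Gp|[X FX Xp]] [Gq|[Y FY Yq]].
  - by exists G0; split => // z ?; left.
  - by exists (G0 `|` Y); split; [exact: FQ|exact: sub|left|right].
  - by exists (G0 `|` X); split; [exact: FQ|exact: sub|right|left].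
  - have [XY|YX] := Ftot _ _ FX FY.
    + by exists (G0 `|` Y); split; [exact: FQ|exact: sub|right; exact: XY|right].
    + by exists (G0 `|` X); split; [exact: FQ|exact: sub|right|right; exact: YX].
split.
- by left; case: G0_dom.
- move=> a p q Up Uq; have [H [[_ Hcl _ _] HU Hp Hq]] := common _ _ Up Uq.
  exact/HU/Hcl.
- move=> x a b Ua Ub; have [H [[_ _ Hf _] _ Hp Hq]] := common _ _ Ua Ub.
  exact: Hf Hp Hq.
- move=> x a Ua; have [H [[_ _ _ Hd] _ Hp _]] := common _ _ Ua Ua.
  exact: Hd Hp.
Qed.

Lemma total_dom_graph (G : set (B * R)) : dom_graph G ->
  (forall x, exists a, G (x, a)) ->
  exists f, [/\ islin f, forall x, G (x, f x) & forall x, `|f x| <= K * `|x|].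
Proof.
move=> [G00 Gcl Gfun Gdom] /choice [f hf]; exists f; split => //.
- move=> a x z; apply: (Gfun (a *: x + z)); first exact: hf.
  exact: (Gcl a _ _ (hf x) (hf z)).
- move=> x; rewrite ler_norml; apply/andP; split; last exact: Gdom (hf x).
  have fN : f (- x) = - f x.
    apply: (Gfun (- x)); first exact: hf.
    by have := Gcl (-1) _ _ (hf x) G00; rewrite /= scaleN1r mulN1r !addr0.
  by have := Gdom _ _ (hf (- x)); rewrite normrN fN lerNl.
Qed.

Lemma hahn_banach (G0 : set (B * R)) : dom_graph G0 ->
  exists f, [/\ islin f, (forall x a, G0 (x, a) -> f x = a) &
              forall x, `|f x| <= K * `|x|].
Proof.
move=> G0_dom.
have [A [A_dom Amax]] : exists A, dom_graph (G0 `|` A) /\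
    forall A', A `<` A' -> ~ dom_graph (G0 `|` A').
  by apply: Zorn_bigcup => F FQ Ftot; exact: dom_graph_chain.
(* by maximality, the graph G0 `|` A is defined everywhere *)
have total x : exists a, (G0 `|` A) (x, a).
  apply: contrapT => nx; have [G' [G'_dom sG' [c G'c]]] := dom_graph_extend A_dom nx.
  apply: (Amax (A `|` G')).
    split; first by move=> z Az; left.
    by move=> h; apply: nx; exists c; right; apply: h; right.
  suff -> : G0 `|` (A `|` G') = G' by [].
  by apply/seteqP; split => z;
    [case=> [?|[?|?]] //; apply: sG'; [left|right] | right; right].
have [f [hl hf hb]] := total_dom_graph A_dom total.
exists f; split => // x a G0a.
by case: A_dom => _ _ Gfun _; apply: (Gfun x); [exact: hf | left].
Qed.

End HahnBanach.

Section Norming.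
Context {R : realType} {B : normedModType R}.

(* Let fh != 0 be of minimal norm in its coset fh + N modulo a subspace N.
   Then some functional of norm <= 1 vanishes on N and norms fh: it is the
   Hahn-Banach extension of t fh + n |-> t ||fh|| from span(fh) + N. *)
Section CosetNorming.
Variables (N : set B) (fh : B).
Hypothesis N0 : N 0.
Hypothesis Ncl : forall a n n', N n -> N n' -> N (a *: n + n').
Hypothesis fh_min : forall n, N n -> `|fh| <= `|fh + n|.
Hypothesis fh0 : fh != 0.

Definition coset_graph : set (B * R) :=
  fun q => exists t n, N n /\ q = (t *: fh + n, t * `|fh|).

(* The graph is single-valued because fh is not in N, and dominated by ||x||
   because ||t fh|| <= ||t fh + n|| by minimality. *)
Lemma coset_graph_dom : dom_graph 1 coset_graph.
Proof.
have n0 : 0 < `|fh| by rewrite normr_gt0.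
have fhN : ~ N fh.
  move=> Nfh; have := fh_min (Ncl (-1) Nfh N0).
  by rewrite addr0 scaleN1r subrr normr0 leNgt n0.
split.
- by exists 0, 0; rewrite scale0r add0r mul0r.
- move=> a _ _ [t [n [Nn ->]]] [t' [n' [Nn' ->]]] /=.
  exists (a * t + t'), (a *: n + n'); split; first exact: Ncl.
  congr (_, _) => /=; last by ring.
  by rewrite scalerDr scalerDl scalerA addrACA.
- move=> x a b [t [n [Nn [ex ->]]]] [t' [n' [Nn' [ex' ->]]]].
  have [->//|tt'] := eqVneq t t'; exfalso; apply: fhN.
  (* otherwise fh = (t - t')^-1 (n' - n) *)
  have -> : fh = (t - t')^-1 *: (n' - n).
    apply: (@scalerI _ _ (t - t')); first by rewrite subr_eq0.
    rewrite scalerA mulfV ?subr_eq0 // scale1r scalerBl.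
    have e : t *: fh + n = t' *: fh + n' by rewrite -ex -ex'.
    by rewrite -[t *: fh](addrK n) e addrC addrA addKr.
  have Nd : N (n' - n) by rewrite addrC -scaleN1r; exact: Ncl.
  by rewrite -[_ *: _]addr0; exact: Ncl.
- move=> x a [t [n [Nn [-> ->]]]]; rewrite mul1r.
  have [t0|t0] := leP t 0.
    by apply: le_trans (normr_ge0 _); rewrite mulr_le0_ge0.
  have := fh_min (Ncl t^-1 Nn N0); rewrite addr0.
  rewrite -(ler_pM2l t0) -{2}(gtr0_norm t0) -normrZ.
  by rewrite scalerDr scalerA mulfV ?gt_eqF // scale1r.
Qed.

Lemma coset_norming_functional :
  exists f0, [/\ islin f0, forall x, `|f0 x| <= `|x|, f0 fh = `|fh|
               & forall n, N n -> f0 n = 0].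
Proof.
have [f0 [hl hf0 hb]] := hahn_banach ler01 coset_graph_dom.
exists f0; split => //.
- by move=> x; rewrite -[X in _ <= X]mul1r.
- by apply: hf0; exists 1, 0; rewrite scale1r addr0 mul1r.
- by move=> n Nn; apply: hf0; exists 0, n; rewrite scale0r add0r mul0r.
Qed.

End CosetNorming.

Lemma norming_functional (g : B) :
  exists mu : B -> R, [/\ is_dual mu, mu g = `|g| & dnorm mu <= 1].
Proof.
have [->|g0] := eqVneq g 0.
  by exists (fun _ => 0); rewrite normr0 dnorm0; split => //; exact: dual0.
have [|||f [hl hb fg _]] := @coset_norming_functional (set1 0) g erefl => //.
- by move=> a _ _ -> ->; rewrite scaler0 addr0.
- by move=> _ ->; rewrite addr0.
have hf : is_dual f by apply: bounded_dual => //; exists 1 => x; rewrite mul1r.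
by exists f; split => //; apply: dnorm_le => // x; rewrite mul1r.
Qed.

End Norming.

Section Span.
Context {R : realType} {B : normedModType R}.

Lemma kernel_lincomb m (nu : 'I_m -> B -> R) (mu : B -> R) :
  (forall j, islin (nu j)) -> islin mu ->
  (forall x, (forall j, nu j x = 0) -> mu x = 0) ->
  exists c : 'I_m -> R, forall x, mu x = lincomb nu c x.
Proof.
elim: m nu mu => [|m IH] nu mu hnu hmu hker.
  by exists (fun _ => 0) => x; rewrite /lincomb big_ord0; apply: hker => -[].
pose nu' k := nu (lift ord0 k); pose l := nu ord0.
have hl : islin l by exact: hnu.
have hnu' k : islin (nu' k) by exact: hnu.
pose extend (c' : 'I_m -> R) a j := if unlift ord0 j is Some k then c' k else a.
have sumE c' a x : lincomb nu (extend c' a) x = a * l x + lincomb nu' c' x.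
  rewrite /lincomb big_ord_recl /extend unlift_none; congr (_ + _).
  by apply: eq_bigr => k _; rewrite liftK.
have ker_split x : (forall k, nu' k x = 0) -> l x = 0 -> mu x = 0.
  move=> h1 h2; apply: hker => j.
  by case: (unliftP ord0 j) => [k ->|->]; [exact: h1 | exact: h2].
have [[z [nz lz]]|noz] := pselect (exists z, (forall k, nu' k z = 0) /\ l z = 1).
- (* mu - mu z * l vanishes on the common kernel of the nu' *)
  pose mu2 x := mu x - mu z * l x.
  have [c' hc'] : exists c', forall x, mu2 x = lincomb nu' c' x.
    apply: IH => [k | b x y | x hx]; first exact: hnu.
      by rewrite /mu2 hmu hl; ring.
    have : mu (x - l x *: z) = 0.
      apply: ker_split => [k|].
        by rewrite (linB _ _ (hnu' k)) (linZ _ _ (hnu' k)) hx nz mulr0 subrr.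
      by rewrite (linB _ _ hl) (linZ _ _ hl) lz mulr1 subrr.
    by rewrite linB // linZ // /mu2 mulrC.
  by exists (extend c' (mu z)) => x; rewrite sumE -hc' /mu2 addrC subrK.
- (* otherwise l itself vanishes on the common kernel of the nu' *)
  have [c' hc'] : exists c', forall x, mu x = lincomb nu' c' x.
    apply: IH => // x hx; apply: ker_split => //.
    apply: contra_notP noz => /eqP lx; exists ((l x)^-1 *: x).
    by split => [k|]; rewrite ?(linZ _ _ (hnu' k)) ?(linZ _ _ hl) ?hx ?mulr0 ?mulVf.
  by exists (extend c' 0) => x; rewrite sumE mul0r add0r -hc'.
Qed.

End Span.

Section Subgradients.
Context {R : realType} {B : normedModType R}.

Lemma subgradient_dnorm (nu : B -> R) (phi : (B -> R) -> R) :
  is_dual nu -> subdiff_dnorm nu phi ->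
  phi nu = dnorm nu /\ forall mu, is_dual mu -> phi mu <= dnorm mu.
Proof.
move=> dnu [[philin _] hsub].
have philinE a mu1 mu2 g : is_dual mu1 -> is_dual mu2 ->
    (forall x, g x = a * mu1 x + mu2 x) -> phi g = a * phi mu1 + phi mu2.
  by move=> h1 h2 /funext ->; exact: philin.
have hsubE mu g : is_dual mu -> (forall x, g x = mu x - nu x) ->
    phi g <= dnorm mu - dnorm nu.
  by move=> h /funext ->; exact: hsub.
(* testing at mu + nu: phi mu <= ||mu + nu|| - ||nu|| <= ||mu|| *)
have phi_le mu : is_dual mu -> phi mu <= dnorm mu.
  move=> hmu; have dsum : is_dual (fun x => mu x + nu x).
    by apply: (dual_ext _ (dual_comb 1 hmu dnu)) => x; rewrite mul1r.
  have := hsubE _ mu dsum (fun x => esym (addrK _ _)).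
  have := dnormD hmu dnu; lra.
split => //; apply/le_anti; rewrite phi_le //=.
(* testing at mu = 0: phi (-nu) <= - ||nu|| *)
have phi0 : phi (fun _ => 0) = 0.
  have := philinE 1 _ _ (fun _ => 0) dual0 dual0
    (fun x => esym (etrans (addr0 _) (mul1r _))).
  lra.
have phiN : phi (fun x => 0 - nu x) = - phi nu.
  rewrite (philinE (-1) nu (fun _ => 0) _ dnu dual0) ?phi0 ?addr0 ?mulN1r //.
  by move=> x; ring.
have := hsubE _ (fun x => 0 - nu x) dual0 (fun x => erefl).
rewrite phiN dnorm0; lra.
Qed.

Lemma canon_emb_subdiff (nu : B -> R) (g : B) :
  is_dual nu -> `|g| <= 1 -> nu g = dnorm nu -> subdiff_dnorm nu (canon_emb g).
Proof.
move=> dnu g1 nug; split.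
- by split=> //; exists `|g| => mu hmu; rewrite mulrC; exact: dual_bound.
- move=> mu hmu; rewrite /canon_emb nug lerD2r.
  apply: le_trans (ler_norm _) (le_trans (dual_bound _ hmu) _).
  rewrite -[X in _ <= X]mulr1; apply: ler_wpM2l => //.
  exact: dnorm_ge0 (dual_bounded hmu).
Qed.

(* If fh = ||nu|| phi in B^** with phi a subgradient at nu, then fh has
   minimal norm among the f with nu f = nu fh: indeed nu fh = ||nu||^2 gives
   ||nu|| <= ||f||, while norming fh gives ||fh|| <= ||nu||. *)
Lemma subgradient_min_norm (nu : B -> R) (phi : (B -> R) -> R) (fh f : B) :
  is_dual nu -> subdiff_dnorm nu phi ->
  (forall mu, is_dual mu -> canon_emb fh mu = dnorm nu * phi mu) ->
  nu f = nu fh -> `|fh| <= `|f|.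
Proof.
move=> dnu hphi hemb nuf.
have [phinu phi_le] := subgradient_dnorm dnu hphi.
have g0 : 0 <= dnorm nu by apply: dnorm_ge0; exact: dual_bounded.
have fh_le : `|fh| <= dnorm nu.
  have [mu [hmu mufh mu1]] := norming_functional fh.
  rewrite -mufh -[mu fh]/(canon_emb fh mu) hemb //.
  apply: le_trans (ler_wpM2l g0 (phi_le _ hmu)) _.
  by rewrite -[X in _ <= X]mulr1 ler_wpM2l.
have : dnorm nu * dnorm nu <= dnorm nu * `|f|.
  rewrite -{2}phinu -hemb // /canon_emb -nuf.
  exact: le_trans (ler_norm _) (dual_bound _ dnu).
have [g_eq0|gp] := eqVneq (dnorm nu) 0.
  by move=> _; apply: le_trans fh_le _; rewrite g_eq0.
rewrite ler_pM2l; last by rewrite lt_def gp g0.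
exact: le_trans.
Qed.

End Subgradients.

Section MinimumNormInterpolation.
Context {R : realType} {B : normedModType R}.
Variables (m : nat) (nu : 'I_m -> B -> R) (y : 'I_m -> R).
Hypothesis dual_nu : forall j, is_dual (nu j).

Lemma mni_solutionP (fh : B) : is_mni_solution nu y fh <->
  interp_set nu y fh /\ forall f, interp_set nu y f -> `|fh| <= `|f|.
Proof.
have lb : has_lbound [set `|f| | f in interp_set nu y] by exists 0 => _ [f _ <-].
split=> [[hfh fh_inf] | [hfh fh_min]]; split => //.
- by move=> f hf; rewrite fh_inf; apply: ge_inf => //; exists f.
- apply/le_anti/andP; split; last by apply: ge_inf => //; exists fh.
  by apply: lb_le_inf; [exists `|fh|, fh | move=> _ [f hf <-]; exact: fh_min].
Qed.

Lemma mni_norming_combination (fh : B) : is_mni_solution nu y fh ->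
  exists c g, [/\ `|g| <= 1, lincomb nu c g = dnorm (lincomb nu c)
                & fh = dnorm (lincomb nu c) *: g].
Proof.
move=> /mni_solutionP [hfh fh_min]; have hl j := (dual_nu j).1.
have [->|fh0] := eqVneq fh 0.
  have zero : lincomb nu (fun _ => 0) = fun _ => 0.
    by apply: funext => x; rewrite /lincomb big1 // => j _; rewrite mul0r.
  by exists (fun _ => 0), 0; rewrite zero dnorm0 normr0 scaler0.
have n0 : 0 < `|fh| by rewrite normr_gt0.
pose N x := forall j, nu j x = 0.
have [|||f0 [hf0 f0_le f0fh f0N]] := @coset_norming_functional _ _ N fh _ _ _ fh0.
- by move=> j; exact: lin0.
- by move=> a n n' Nn Nn' j; rewrite hl Nn Nn' mulr0 addr0.
- by move=> n Nn; apply: fh_min => j; rewrite linD // Nn addr0.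
have [c0 hc0] := kernel_lincomb hl hf0 f0N.
pose c j := `|fh| * c0 j.
have nucE x : lincomb nu c x = `|fh| * f0 x.
  by rewrite hc0 /lincomb mulr_sumr; apply: eq_bigr => j _; rewrite mulrA.
have dnuc : dnorm (lincomb nu c) = `|fh|.
  apply/le_anti/andP; split.
    apply: dnorm_le => // x; rewrite nucE normrM ger0_norm //.
    exact: ler_wpM2l.
  have := dual_bound fh (dual_lincomb c dual_nu).
  by rewrite nucE f0fh ger0_norm ?mulr_ge0 // ler_pM2r.
exists c, (`|fh|^-1 *: fh); rewrite dnuc scalerA mulfV ?gt_eqF // scale1r.
split => //.
- by rewrite normrZ normfV normr_id mulVf ?gt_eqF.
- by rewrite nucE linZ // f0fh mulVf ?gt_eqF // mulr1.
Qed.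

End MinimumNormInterpolation.

Theorem mainTheorem5 (R : realType) (B : completeNormedModType R) (m : nat)
  (nu : 'I_m -> B -> R) (y : 'I_m -> R) (fh : B) :
  (forall j, is_dual (nu j)) -> lin_indep_dual nu ->
  is_mni_solution nu y fh <->
  (interp_set nu y fh /\
   exists c : 'I_m -> R,
     let nuc := fun x : B => \sum_(j < m) c j * nu j x in
     let gamma := dnorm nuc in
     exists phi : (B -> R) -> R, subdiff_dnorm nuc phi /\
       forall mu : B -> R, is_dual mu -> canon_emb fh mu = gamma * phi mu).
Proof.
move=> dual_nu _; split => [hsol | [hfh [c [phi [hphi hemb]]]]].
- split; first exact: hsol.1.
  have [c [g [g1 nug efh]]] := mni_norming_combination dual_nu hsol.
  exists c, (canon_emb g); split.
    exact: canon_emb_subdiff (dual_lincomb c dual_nu) g1 nug.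
  by move=> mu hmu; rewrite efh /canon_emb (linZ _ _ hmu.1).
- apply/(mni_solutionP nu y); split => // f hf.
  apply: (subgradient_min_norm (dual_lincomb c dual_nu) hphi hemb).
  by apply: eq_bigr => j _; rewrite hf hfh.
Qed.
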